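(* Fix a finite alphabet $\{1,\ldots,S\}$ and a probability distribution $Q=(q_1,\ldots,q_S)$. For a nonnegative vector $R=(r_1,\ldots,r_S)$ and $\hat A\subseteq\{1,\ldots,S\}$ let $\ell(\hat A;R,Q)=\frac14\sum_i|r_i-q_i|-\frac12(R(\hat A)-Q(\hat A))$. Under the Poisson model, the counts $n\hat r_i\sim\mathsf{Poi}(nr_i)$, $1\le i\le S$, are mutually independent and a decision rule $\hat A$ is a function of these counts and $Q$. Let $\mathcal{D}_0(S,\epsilon)=\{(p_1,\ldots,p_S):p_i\ge0,\ |\sum_ip_i-1|<\epsilon\}$, define the Poissonized minimax regret $R_P(S,n,Q,\epsilon)=\inf_{\hat A}\sup_{R\in\mathcal{D}_0(S,\epsilon)}\mathbb{E}_R[\ell(\hat A;R,Q)]$ and, for a prior $\mu$ on nonnegative vectors in $\mathbb{R}^S$, the Bayes regret $R_B(S,n,Q,\mu)=\inf_{\hat A}\int\mathbb{E}_R[\ell(\hat A;R,Q)]\,\mu(dR)$, both under the Poisson model. If there exists a constant $C>1$ such that $\mu\{P:\sum_{i=1}^S p_i\le C\}=1$, then $$R_P(S,n,Q,\epsilon)\ge R_B(S,n,Q,\mu)-C\,\mu\big((\mathcal{D}_0(S,\epsilon))^c\big).$$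
   Context: $\mathsf{Poi}(\lambda)$ is the Poisson distribution with mean $\lambda$; $R(\hat A)=\sum_{i\in\hat A}r_i$. *)

From HB Require Import structures.
From mathcomp Require Import all_boot all_order all_algebra.
From mathcomp Require Import all_classical all_reals all_analysis.
Set Implicit Arguments. Unset Strict Implicit. Unset Printing Implicit Defensive.
Import Order.TTheory GRing.Theory Num.Theory numFieldNormedType.Exports.
Local Open Scope ring_scope.

Section Defs.
Variables (R : realType) (S : nat).

Definition pois (lam : R) (k : nat) : R := lam ^+ k / k`!%:R * expR (- lam).

Definition massof (r : 'I_S -> R) (A : {set 'I_S}) : R := \sum_(i in A) r i.

Definition loss (A : {set 'I_S}) (r q : 'I_S -> R) : R :=
  4^-1 * (\sum_i `|r i - q i|) - 2^-1 * (massof r A - massof q A).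

(* A (deterministic) decision rule: a function of the count vector
   (n r^_i)_i; Q is fixed, so dependence on Q is implicit. *)
Definition rule := ('I_S -> nat) -> {set 'I_S}.

Definition Eloss_trunc (n : nat) (A : rule) (r q : 'I_S -> R) (N : nat) : R :=
  \sum_(k : {ffun 'I_S -> 'I_N})
     (\prod_i pois (n%:R * r i) (k i)) * loss (A (fun i => nat_of_ord (k i))) r q.

(* E_R[ l(A;R,Q) ] under the Poisson model: counts n r^_i ~ Poi(n r_i),
   independent; the (absolutely convergent) sum over N^S is taken as the limit
   of the sums over the boxes {0..N-1}^S. *)
Definition Eloss (n : nat) (A : rule) (r q : 'I_S -> R) : R :=
  limn (Eloss_trunc n A r q).

Definition D0 (eps : R) : set ('I_S -> R) :=
  [set p | (forall i, 0 <= p i) /\ `|\sum_i p i - 1| < eps].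

Definition RP (n : nat) (q : 'I_S -> R) (eps : R) : \bar R :=
  ereal_inf [set v | exists A : rule,
    v = ereal_sup [set w | exists2 r, D0 eps r & w = (Eloss n A r q)%:E]].

(* Bayes regret R_B(S,n,Q,mu), where the prior mu is the law of the random
   nonnegative vector X defined on the probability space (T, P). *)
Definition RB d (T : measurableType d) (P : probability T R)
    (X : T -> 'I_S -> R) (n : nat) (q : 'I_S -> R) : \bar R :=
  ereal_inf [set v | exists A : rule,
    v = (\int[P]_t (Eloss n A (X t) q)%:E)%E].

End Defs.

From HB Require Import structures.
From mathcomp Require Import all_boot all_order all_algebra.
From mathcomp Require Import all_classical all_reals all_analysis.
From mathcomp Require Import measurable_realfun lra.
Set Implicit Arguments. Unset Strict Implicit. Unset Printing Implicit Defensive.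
Import Order.TTheory GRing.Theory Num.Theory numFieldNormedType.Exports.
Local Open Scope ring_scope.
Local Open Scope classical_set_scope.

(* Fix a rule A and let m be its worst-case risk over D_0 (if m is infinite
   there is nothing to prove).  The risk of A at R is at most m when R lies in
   D_0; otherwise, since the Poisson weights of a box of counts sum to at most
   one, it is at most the largest loss, (sum_i r_i + 3) / 4 <= C, because
   mu-almost surely sum_i r_i <= C and C >= 1.  Integrating against mu bounds the Bayes risk
   of A by m + C mu(D_0^c). *)

Section poisson_weights.
Variable R : realType.

Lemma pois_ge0 (l : R) k : 0 <= l -> 0 <= pois l k.
Proof. by move=> l0; rewrite /pois mulr_ge0 ?expR_ge0 ?divr_ge0 ?exprn_ge0. Qed.

Lemma sum_pois_le1 (l : R) N : 0 <= l -> \sum_(k < N) pois l k <= 1.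
Proof.
move=> l0; rewrite -mulr_suml expRN ler_pdivrMr ?expR_gt0 // mul1r.
have exp_series_le : series (exp_coeff l) N <= expR l.
  apply: nondecreasing_cvgn_le; last exact: is_cvg_series_exp_coeff.
  apply/nondecreasing_seqP => m; rewrite /series /= big_nat_recr //= lerDl.
  by rewrite /exp_coeff /= divr_ge0 ?exprn_ge0.
by move: exp_series_le; rewrite /series /= big_mkord.
Qed.

Lemma sum_prod_pois_le1 (I : finType) (l : I -> R) N : (forall i, 0 <= l i) ->
  \sum_(k : {ffun I -> 'I_N}) \prod_i pois (l i) (k i) <= 1.
Proof.
move=> l0; rewrite -(bigA_distr_bigA (fun i (j : 'I_N) => pois (l i) j)).
apply: prodr_ile1 => i _; rewrite sum_pois_le1 // andbT.
by apply: sumr_ge0 => j _; exact: pois_ge0.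
Qed.

End poisson_weights.

Section poisson_risk.
Variables (R : realType) (S n : nat).
Implicit Types (A : rule S) (B : {set 'I_S}) (r q : 'I_S -> R).

Lemma loss_diag B q : loss B q q = 0.
Proof.
rewrite /loss subrr mulr0 subr0 big1 ?mulr0 // => i _.
by rewrite subrr normr0.
Qed.

Lemma Eloss_diag A q : Eloss n A q q = 0.
Proof.
rewrite /Eloss (_ : Eloss_trunc n A q q = cst 0) ?lim_cst //.
by apply/funext => N; rewrite /Eloss_trunc big1 // => k _; rewrite loss_diag mulr0.
Qed.

Lemma loss_le_mass B r q : (forall i, 0 <= r i) -> (forall i, 0 <= q i) ->
  \sum_i q i = 1 -> loss B r q <= 4^-1 * (\sum_i r i + 3).
Proof.
move=> r0 q0 q1; rewrite /loss /massof.
have dist_le : \sum_i `|r i - q i| <= \sum_i r i + 1.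
  rewrite -q1 -big_split /=; apply: ler_sum => i _.
  by rewrite (le_trans (ler_normB _ _)) // !ger0_norm.
have rB_ge0 : 0 <= \sum_(i in B) r i by apply: sumr_ge0.
have qB_le1 : \sum_(i in B) q i <= 1.
  by rewrite -q1 [leRHS](bigID (mem B)) /= lerDl sumr_ge0.
lra.
Qed.

Lemma Eloss_trunc_le A r q b N : (forall i, 0 <= r i) -> 0 <= b ->
  (forall B, loss B r q <= b) -> Eloss_trunc n A r q N <= b.
Proof.
move=> r0 b0 loss_le; rewrite /Eloss_trunc.
apply: (@le_trans _ _ (\sum_(k : {ffun 'I_S -> 'I_N})
                         (\prod_i pois (n%:R * r i) (k i)) * b)).
  apply: ler_sum => k _; rewrite ler_wpM2l //.
  by apply: prodr_ge0 => i _; rewrite pois_ge0 ?mulr_ge0.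
by rewrite -mulr_suml ler_piMl // sum_prod_pois_le1 // => i; rewrite mulr_ge0.
Qed.

(* When the truncated sums diverge, [limn] returns the junk value 0, hence [0 <= b]. *)
Lemma Eloss_le A r q b : (forall i, 0 <= r i) -> 0 <= b ->
  (forall B, loss B r q <= b) -> Eloss n A r q <= b.
Proof.
move=> r0 b0 loss_le; rewrite /Eloss.
have [cv|dv] := pselect (cvgn (Eloss_trunc n A r q)); last by rewrite dvgP.
by apply: limr_le => //; near=> N; exact: Eloss_trunc_le.
Unshelve. all: by end_near.
Qed.

Lemma Eloss_le_mass A r q C : (forall i, 0 <= r i) -> (forall i, 0 <= q i) ->
  \sum_i q i = 1 -> 1 <= C -> \sum_i r i <= C -> Eloss n A r q <= C.
Proof.
move=> r0 q0 q1 C1 rC; apply: Eloss_le => [//||B]; first lra.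
by apply: le_trans (loss_le_mass B r0 q0 q1) _; lra.
Qed.

End poisson_risk.

Lemma measurable_D0 d (T : measurableType d) (R : realType) (S : nat)
    (X : T -> 'I_S -> R) (eps : R) :
  (forall i, measurable_fun setT (fun t => X t i)) ->
  measurable [set t | D0 eps (X t)].
Proof.
move=> mX.
have -> : [set t | D0 eps (X t)] = \bigcap_(i in setT) [set t | 0 <= X t i]
                                   `&` [set t | `|\sum_i X t i - 1| < eps].
  apply/seteqP; split => t [X0 Xe]; split => // i; [move=> _ |]; exact: X0.
apply: measurableI.
  apply: fin_bigcap_measurable => [|i _]; first exact: finite_finset.
  rewrite -[X in measurable X]setTI; exact: measurable_fun_le.
have -> : [set t | `|\sum_i X t i - 1| < eps]
          = ~` (setT `&` [set t | cst eps t <= `|\sum_i X t i - 1|]).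
  apply/seteqP; split => t /=; first by move=> lt_eps [_]; rewrite leNgt lt_eps.
  by move=> nle; rewrite ltNge; apply/negP => le_eps; exact: nle.
apply/measurableC/measurable_fun_le => //.
apply: measurableT_comp => //; apply: measurable_funB => //.
exact: measurable_sum.
Qed.

Section integral_bounds.
Local Open Scope ereal_scope.
Context d (T : measurableType d) (R : realType).
Import HBNNSimple.

(* Works for non-measurable [f] because [\int f^\+] is a supremum over simple
   functions below [f^\+], each of which is measurable. *)
Lemma ae_le_integral_measurable_ge0 (mu : {measure set T -> \bar R})
    (f g : T -> \bar R) :
  (forall t, 0 <= g t) -> measurable_fun setT g ->
  {ae mu, forall t, f t <= g t} -> \int[mu]_t f t <= \int[mu]_t g t.
Proof.
move=> g0 mg fg; rewrite integralE.
apply: (@le_trans _ _ (\int[mu]_t f^\+ t)).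
  by rewrite -[leRHS]sube0 leeB // integral_ge0.
rewrite ge0_integralTE //; apply: ge_ereal_sup => _ [h hf <-].
have := integral_nnsfun mu measurableT h; rewrite patch_setT => <-.
apply: ae_ge0_le_integral => //.
- by move=> t _; rewrite lee_fin; exact: fun_ge0.
- exact/measurable_EFinP.
case: fg => N [mN N0 fgN]; exists N; split => // t /= h_gt_g; apply: fgN => ft.
by apply: h_gt_g => _; rewrite (le_trans (hf t)) // funeposE ge_max ft g0.
Qed.

Lemma integral_cstD_indic (P : probability T R) (D : set T) (m c : R) :
  measurable D -> (0 <= m)%R -> (0 <= c)%R ->
  \int[P]_t (m + c * \1_D t)%:E = m%:E + c%:E * P D.
Proof.
move=> mD m0 c0; rewrite (eq_integral (fun t => m%:E + c%:E * (\1_D t)%:E)) //.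
rewrite ge0_integralD //=.
- rewrite integral_cst // [X in m%:E * X](_ : _ = 1) ?mule1; last exact: probability_setT.
  rewrite ge0_integralZl_EFin ?integral_indic ?setIT //.
  exact/measurable_EFinP/measurable_indic.
- by move=> t _; rewrite mule_ge0 ?lee_fin.
- apply: emeasurable_funM => //; exact/measurable_EFinP/measurable_indic.
Qed.

End integral_bounds.

Section bayes_risk_bound.
Context (R : realType) (S n : nat) (q : 'I_S -> R) (eps C : R).
Context d (T : measurableType d) (P : probability T R) (X : T -> 'I_S -> R).
Hypotheses (q_ge0 : forall i, 0 <= q i) (q_sum1 : \sum_i q i = 1).
Hypotheses (mX : forall i, measurable_fun setT (fun t => X t i))
           (X_ge0 : forall t i, 0 <= X t i).
Hypotheses (C_ge1 : 1 <= C) (PC : P [set t | \sum_i X t i <= C] = 1%E).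

Lemma integral_Eloss_le A m : 0 <= m ->
  (forall r, D0 eps r -> Eloss n A r q <= m) ->
  (\int[P]_t (Eloss n A (X t) q)%:E
     <= m%:E + C%:E * P [set t | ~ D0 eps (X t)])%E.
Proof.
move=> m_ge0 risk_le; pose Dc := [set t | ~ D0 eps (X t)].
have mDc : measurable Dc by apply/measurableC/measurable_D0.
pose G := [set t | \sum_i X t i <= C].
have mG : measurable G.
  by rewrite -[G]setTI; apply: measurable_fun_le => //; exact: measurable_sum.
have PGc : P (~` G) = 0%E by rewrite probability_setC // PC subee.
have C_ge0 : 0 <= C by apply: le_trans C_ge1.
rewrite -integral_cstD_indic //; apply: ae_le_integral_measurable_ge0.
- by move=> t; rewrite lee_fin addr_ge0 // mulr_ge0.
- apply/measurable_EFinP; apply: measurable_funD => //.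
  by apply: measurable_funM => //; exact: measurable_indic.
exists (~` G); split; [exact: measurableC | exact: PGc |].
move=> t /= risk_gt sumC; apply: risk_gt; rewrite lee_fin indicE.
have [D0t|nD0t] := pselect (D0 eps (X t)).
  by rewrite memNset ?mulr0 ?addr0 ?risk_le.
by rewrite mem_set // mulr1 (@le_trans _ _ C) ?lerDr // Eloss_le_mass.
Qed.

End bayes_risk_bound.

Theorem lemma9 (R : realType) (S n : nat) (q : 'I_S -> R)
  (eps : R) (C : R)
  (d : measure_display) (T : measurableType d) (P : probability T R)
  (X : T -> 'I_S -> R) :
  (forall i, 0 <= q i) -> \sum_i q i = 1 ->
  0 < eps ->
  (forall i, measurable_fun setT (fun t => X t i)) ->
  (forall t i, 0 <= X t i) ->
  1 < C ->
  P [set t | \sum_i X t i <= C] = 1%E ->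
  (RP n q eps >= RB P X n q - C%:E * P [set t | ~ D0 eps (X t)])%E.
Proof.
move=> q0 q1 eps0 mX X0 C1 PC.
apply: le_ereal_inf_tmp => _ [A ->].
set M := ereal_sup _.
have M_ge0 : (0 <= M)%E.
  apply: ereal_sup_ubound; exists q; last by rewrite Eloss_diag.
  by split => //; rewrite q1 subrr normr0.
have [[m Mm]|->] : (exists m, M = m%:E) \/ M = +oo%E; last by rewrite leey.
  by case: M M_ge0 => [m|_|//]; [left; exists m | right].
have m_ge0 : 0 <= m by rewrite -lee_fin -Mm.
have risk_le r : D0 eps r -> Eloss n A r q <= m.
  by move=> D0r; rewrite -lee_fin -Mm; apply: ereal_sup_ubound; exists r.
have penalty_fin : (C%:E * P [set t | ~ D0 eps (X t)])%E \is a fin_num.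
  by rewrite fin_numM // fin_num_measure //; exact/measurableC/measurable_D0.
rewrite Mm leeBlDr //.
apply: le_trans _ (integral_Eloss_le q0 q1 mX X0 (ltW C1) PC m_ge0 risk_le).
by apply: ereal_inf_lbound; exists A.
Qed.
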